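(* Let $\theta:\mathbb{A}\to\mathbb{A}^\lambda$ be a primitive substitution satisfying the standing assumptions, and let $\widetilde\theta:\mathcal{X}\to\mathcal{X}^\lambda$ be its synchronizing part. Then (i) $c(\widetilde\theta)=1$; (ii) $\widetilde\theta$ is primitive; (iii) $h(\widetilde\theta)=1$.
   Context: Substitution $\theta:\mathbb{A}\to\mathbb{A}^\lambda$, $\lambda\ge2$, $\theta(a)=\theta(a)_0\cdots\theta(a)_{\lambda-1}$, iterates $\theta^k$; primitive: some $\theta^k(a)$ contains all letters for every $a$. Standing assumptions: $\theta(a_0)_0=a_0$, $\theta$ injective on letters, subshift infinite. For any primitive substitution $\zeta$ over $\mathbb{B}$: column number $c(\zeta)=\min_{k\ge1,0\le j<\lambda^k}|\{\zeta^k(b)_j:b\in\mathbb{B}\}|$; height $h(\zeta)=\max\{m\ge1:\gcd(m,\lambda)=1,\ m\mid\gcd\{r\ge1:v[r]=v[0]\}\}$ for a fixed point $v$ of a suitable power of $\zeta$. Synchronizing part: $\mathcal{X}$ is the set of $M\subset\mathbb{A}$ with $|M|=c(\theta)$ and $M=\{\theta^k(a)_j:a\in\mathbb{A}\}$ for some $k\ge1$, $0\le j<\lambda^k$. For $M\in\mathcal{X}$ and $0\le j<\lambda$, $\theta(M)_j:=\{\theta(a)_j:a\in M\}$ belongs to $\mathcal{X}$, and $\widetilde\theta(M):=\theta(M)_0\theta(M)_1\cdots\theta(M)_{\lambda-1}$ defines $\widetilde\theta:\mathcal{X}\to\mathcal{X}^\lambda$. *)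

From mathcomp Require Import all_boot all_order all_algebra.
From Stdlib Require Import ClassicalEpsilon.
Set Implicit Arguments. Unset Strict Implicit. Unset Printing Implicit Defensive.

Section Subst.
Variables (B : finType) (n : nat) (zeta : B -> n.-tuple B).

Definition subst_word (w : seq B) : seq B := flatten [seq val (zeta b) | b <- w].

Definition subst_iter (k : nat) (b : B) : seq B := iter k subst_word [:: b].

Definition column (k j : nat) : {set B} :=
  [set nth b (subst_iter k b) j | b : B].

Definition is_column_number (c : nat) : Prop :=
  (exists k j, 0 < k /\ j < n ^ k /\ #|column k j| = c) /\
  (forall k j, 0 < k -> j < n ^ k -> c <= #|column k j|).

Definition primitive : Prop :=
  exists k, 0 < k /\ forall a b : B, b \in subst_iter k a.

Definition is_fixed_point (p : nat) (v : nat -> B) : Prop :=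
  forall i j, j < n ^ p -> v (i * n ^ p + j) = nth (v i) (subst_iter p (v i)) j.

Definition height_ok (v : nat -> B) (m : nat) : Prop :=
  0 < m /\ coprime m n /\ (forall r, 0 < r -> v r = v 0 -> m %| r).
Definition is_height_of (v : nat -> B) (h : nat) : Prop :=
  height_ok v h /\ (forall m, height_ok v m -> m <= h).

(* h(zeta) = h : fixed points of powers exist, and every such fixed point
   has height h (the height does not depend on the chosen fixed point) *)
Definition is_height (h : nat) : Prop :=
  (exists p v, 0 < p /\ is_fixed_point p v) /\
  (forall p v, 0 < p -> is_fixed_point p v -> is_height_of v h).
End Subst.

Definition in_language (A : finType) (n : nat) (theta : A -> n.-tuple A)
  (w : seq A) : Prop := exists k a, infix w (subst_iter theta k a).

Definition in_subshift (A : finType) (n : nat) (theta : A -> n.-tuple A)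
  (x : int -> A) : Prop :=
  forall (i : int) (m : nat), in_language theta (mkseq (fun l => x (i + l%:Z)%R) m).

Definition subshift_infinite (A : finType) (n : nat) (theta : A -> n.-tuple A) : Prop :=
  ~ exists (N : nat) (f : 'I_N -> (int -> A)),
      forall x, in_subshift theta x -> exists i, x = f i.

Definition pbool (P : Prop) : bool :=
  if excluded_middle_informative P then true else false.

Definition in_sync (A : finType) (n : nat) (theta : A -> n.-tuple A) (M : {set A}) : bool :=
  pbool (exists c, is_column_number theta c /\ #|M| = c /\
           exists k j, 0 < k /\ j < n ^ k /\ M = column theta k j).

Definition sync_alph (A : finType) (n : nat) (theta : A -> n.-tuple A) :=
  {M : {set A} | in_sync theta M}.

Definition set_col (A : finType) (n : nat) (theta : A -> n.-tuple A)
  (M : {set A}) (j : nat) : {set A} := [set nth a (val (theta a)) j | a in M].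

(* synchronizing part theta~ : calX -> calX^n.  Since theta(M)_j lies in calX
   (fact recorded in the paper), insubd never uses its default M. *)
Definition sync_part (A : finType) (n : nat) (theta : A -> n.-tuple A)
  (M : sync_alph theta) : n.-tuple (sync_alph theta) :=
  [tuple insubd M (set_col theta (val M) j) | j < n].
Arguments sync_part {A n} theta M.

(* Let theta be a substitution of length lam >= 2 with column number c, and
   let X be the set of columns of theta of minimal size c.  For M in X write
   theta^k(M)_j = {theta^k(a)_j : a in M} ("subcolumn").  Since
   theta^k(M)_j is contained in a column and contains at most c letters, it
   is itself a column of minimal size; in particular, if X(k,j) := column k j
   has size c, then theta^k(M)_j = X(k,j) for EVERY M in X.  Translated to
   the substitution theta~ on X (whose k-th iterate computes subcolumns) this
   says:
   - theta~ has a synchronizing word: theta~^k(M)_j = X(k,j) for all M,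
     hence c(theta~) = 1;
   - every letter N = X(k,j) of X occurs in theta~^K(M) for all K >= k and
     all M, hence theta~ is primitive.
   Independently of theta, any primitive substitution with a synchronizing
   word has height 1: a fixed point v returns to v(0) along an arithmetic
   progression i * lam^L + J, whose step lam^L is coprime to any admissible
   height.  Fixed points of powers exist for every substitution of length at
   least 2, which completes the three claims. *)
From mathcomp Require Import all_boot all_order all_algebra.
From mathcomp Require Import zify.
From Stdlib Require Import ClassicalEpsilon.
Set Implicit Arguments. Unset Strict Implicit. Unset Printing Implicit Defensive.

Lemma mixed_radix_lt i j a b : i < a -> j < b -> i * b + j < a * b.
Proof.
move=> lt_ia lt_jb; have : i.+1 * b <= a * b by rewrite leq_mul2r lt_ia orbT.
rewrite mulSn; lia.
Qed.

Section Substitution.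
Variables (B : finType) (n : nat) (zeta : B -> n.-tuple B).
Local Notation sw := (subst_word zeta).
Local Notation "zeta^ k" := (subst_iter zeta k) (at level 8, format "zeta^ k").

Lemma subst_word_cat s1 s2 : sw (s1 ++ s2) = sw s1 ++ sw s2.
Proof. by rewrite /subst_word map_cat flatten_cat. Qed.

Lemma iter_subst_word_cat k s1 s2 :
  iter k sw (s1 ++ s2) = iter k sw s1 ++ iter k sw s2.
Proof. by elim: k => //= k IH; rewrite IH subst_word_cat. Qed.

Lemma size_iter_subst_word k s : size (iter k sw s) = n ^ k * size s.
Proof.
have size_sw t : size (sw t) = n * size t.
  elim: t => [|x t IH]; first by rewrite muln0.
  by rewrite /subst_word /= size_cat size_tuple -/(sw t) IH mulnS.
by elim: k => [|k IH] /=; rewrite ?mul1n // size_sw IH expnS mulnA.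
Qed.

Lemma size_subst_iter k b : size (zeta^k b) = n ^ k.
Proof. by rewrite /subst_iter size_iter_subst_word muln1. Qed.

Lemma subst_iter1 b : zeta^1 b = val (zeta b).
Proof. by rewrite /subst_iter /= /subst_word /= cats0. Qed.

Lemma nth_iter_subst_word k s x0 i j : i < size s -> j < n ^ k ->
  nth x0 (iter k sw s) (i * n ^ k + j) = nth x0 (iter k sw [:: nth x0 s i]) j.
Proof.
elim: s i => [|x s IH] [|i] //= lt_is lt_j; rewrite -cat1s iter_subst_word_cat nth_cat
  size_iter_subst_word muln1 ?mul0n ?add0n ?lt_j // mulSn -addnA ltnNge leq_addr /=.
by rewrite addKn; apply: IH.
Qed.

Lemma nth_subst_iterD t k b x0 i j : i < n ^ t -> j < n ^ k ->
  nth x0 (zeta^(t + k) b) (i * n ^ k + j) = nth x0 (zeta^k (nth b (zeta^t b) i)) j.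
Proof.
move=> lt_i lt_j; rewrite /subst_iter addnC iterD nth_iter_subst_word
  ?size_iter_subst_word ?muln1 //.
by rewrite [nth x0 (iter t _ _) i](set_nth_default b) ?size_iter_subst_word ?muln1.
Qed.

Lemma nth_subst_iterD0 t k b x0 j : 0 < n -> j < n ^ k ->
  nth x0 (zeta^(t + k) b) j = nth x0 (zeta^k (nth b (zeta^t b) 0)) j.
Proof.
move=> n_gt0 lt_j; have := @nth_subst_iterD t k b x0 0 j.
by rewrite mul0n add0n; apply; rewrite // expn_gt0 n_gt0.
Qed.

Definition synchronizing k j (m : B) :=
  [/\ 0 < k, j < n ^ k & forall b, nth b (zeta^k b) j = m].

Lemma synchronizing_shift t k j m : 0 < n ->
  synchronizing k j m -> synchronizing (t + k) j m.
Proof.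
move=> n_gt0 [k_gt0 lt_j sync]; split; first by rewrite addn_gt0 k_gt0 orbT.
  by rewrite (leq_trans lt_j) // leq_pexp2l // leq_addl.
move=> b; rewrite nth_subst_iterD0 //.
by rewrite (set_nth_default (nth b (zeta^t b) 0)) ?size_subst_iter.
Qed.

Lemma synchronizing_column_number k j m :
  synchronizing k j m -> is_column_number zeta 1.
Proof.
move=> [k_gt0 lt_j sync]; split.
  exists k, j; split=> //; split=> //; apply/eqP/cards1P; exists m.
  by apply/setP => x; rewrite inE; apply/imsetP/eqP => [[b _ ->]|->]; last exists m.
move=> k' j' _ _; rewrite card_gt0; apply/set0Pn.
by exists (nth m (zeta^k' m) j'); apply: imset_f.
Qed.

Lemma fixed_point_pow p s v : 0 < n ->
  is_fixed_point zeta p v -> is_fixed_point zeta (p * s) v.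
Proof.
move=> n_gt0 fix_v; elim: s => [|s IH] i j.
  by rewrite muln0 expn0 ltnS leqn0 => /eqP ->; rewrite muln1 addn0.
rewrite mulnS addnC => lt_j.
have np_gt0 : 0 < n ^ p by rewrite expn_gt0 n_gt0.
have lt_q : j %/ n ^ p < n ^ (p * s) by rewrite ltn_divLR // -expnD.
have lt_r : j %% n ^ p < n ^ p by rewrite ltn_mod.
rewrite {1}(divn_eq j (n ^ p)) expnD mulnA addnA -mulnDl fix_v // IH //.
rewrite [in RHS](divn_eq j (n ^ p)) nth_subst_iterD //.
by rewrite (set_nth_default (v i)) // size_subst_iter.
Qed.

Lemma fixed_point_returns k0 j0 m0 p v : 0 < n ->
  synchronizing k0 j0 m0 -> primitive zeta -> 0 < p -> is_fixed_point zeta p v ->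
  exists L J, forall i, v (i * n ^ L + J) = v 0.
Proof.
move=> n_gt0 sync [K [_ occurs]] p_gt0 fix_v.
pose q := index (v 0) (zeta^K m0).
have lt_q : q < n ^ K by rewrite -(size_subst_iter K m0) index_mem.
pose L := p * (k0 + K); pose t := L - (k0 + K).
have eL : L = (t + k0) + K by rewrite -addnA subnK // leq_pmull.
have [_ lt_j0 sync_j0] := synchronizing_shift t n_gt0 sync.
exists L, (j0 * n ^ K + q) => i.
rewrite fixed_point_pow // -/L; last by rewrite eL expnD mixed_radix_lt.
rewrite eL nth_subst_iterD // sync_j0.
by rewrite (set_nth_default m0) ?size_subst_iter // nth_index.
Qed.

Lemma returns_height_one (v : nat -> B) L J : 0 < n ->
  (forall i, v (i * n ^ L + J) = v 0) -> is_height_of n v 1.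
Proof.
move=> n_gt0 ret; split; first by split=> //; split=> //; rewrite /coprime gcd1n.
move=> m [_ [cop_mn dvd_ret]].
have X_gt0 : 0 < n ^ L by rewrite expn_gt0 n_gt0.
have dvd1 : m %| 1 * n ^ L + J by apply: dvd_ret; [lia | exact: ret].
have dvd2 : m %| 2 * n ^ L + J by apply: dvd_ret; [lia | exact: ret].
have dvdX : m %| n ^ L.
  rewrite -(dvdn_addr _ dvd1).
  by have -> : 1 * n ^ L + J + n ^ L = 2 * n ^ L + J by lia.
by have := coprimeXr L cop_mn; rewrite /coprime (gcdn_idPl dvdX) => /eqP ->.
Qed.

Lemma head_subst_iter k b : 0 < n ->
  nth b (zeta^k b) 0 = iter k (fun a => nth a (zeta^1 a) 0) b.
Proof.
move=> n_gt0; elim: k => [|k IH] //.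
rewrite -[in LHS]addn1 nth_subst_iterD0 ?expn1 // IH iterS.
by apply: set_nth_default; rewrite size_subst_iter expn1.
Qed.

Lemma fixed_point_of_head p y : 1 < n -> 0 < p -> nth y (zeta^p y) 0 = y ->
  exists v, is_fixed_point zeta p v.
Proof.
move=> n_gt1 p_gt0 head_y; have n_gt0 : 0 < n by lia.
have head_pow s : nth y (zeta^(p * s) y) 0 = y.
  elim: s => [|s IH]; first by rewrite muln0.
  by rewrite mulnS addnC nth_subst_iterD0 ?expn_gt0 ?n_gt0 // IH head_y.
have prefix a b i : i < n ^ (p * a) -> i < n ^ (p * b) ->
    nth y (zeta^(p * a) y) i = nth y (zeta^(p * b) y) i.
  wlog le_ab : a b / a <= b => [sym|lt_ia _].
    by case: (leqP a b) => [|/ltnW] le; [apply: sym | move=> *; symmetry; apply: sym].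
  by rewrite -(subnK le_ab) mulnDr nth_subst_iterD0 // head_pow.
have lt_pos i : i < n ^ (p * i.+1).
  by rewrite (leq_trans (ltn_expl i n_gt1)) // leq_pexp2l ?(leq_trans _ (leq_pmull _ _)).
exists (fun i => nth y (zeta^(p * i.+1) y) i) => i j lt_j.
have lt_ij : i * n ^ p + j < n ^ (p * i.+2).
  by rewrite mulnS (addnC p) expnD mixed_radix_lt ?lt_pos.
rewrite (prefix _ i.+2) ?lt_pos // mulnS (addnC p) nth_subst_iterD ?lt_pos //.
by rewrite (set_nth_default (nth y (zeta^(p * i.+1) y) i)) // size_subst_iter.
Qed.

Lemma periodic_point (f : B -> B) (b : B) : exists y p, 0 < p /\ iter p f y = y.
Proof.
pose g (i : 'I_#|B|.+1) := iter i f b.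
have /injectivePn [i [j neq_ij eq_g]] : ~~ injectiveb g.
  by apply/injectiveP => /leq_card; rewrite card_ord ltnn.
wlog lt_ij : i j neq_ij eq_g / i < j.
  move=> sym; case: (ltngtP i j) => [|lt_ji|/val_inj eq_ij]; first exact: sym.
    by apply: (sym j i) => //; rewrite eq_sym.
  by rewrite eq_ij eqxx in neq_ij.
exists (g i), (j - i); split; first by rewrite subn_gt0.
by rewrite /g -iterD subnK 1?ltnW // -[RHS]eq_g.
Qed.

Lemma exists_fixed_point (b : B) : 1 < n -> exists p v, 0 < p /\ is_fixed_point zeta p v.
Proof.
move=> n_gt1; have [y [p [p_gt0 per_y]]] := periodic_point (fun a => nth a (zeta^1 a) 0) b.
have head_y : nth y (zeta^p y) 0 = y by rewrite head_subst_iter 1?ltnW.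
by have [v fix_v] := fixed_point_of_head n_gt1 p_gt0 head_y; exists p, v.
Qed.

Lemma primitive_of_eventual_occurrence :
  (forall b', exists K, forall K' b, K <= K' -> b' \in zeta^K' b) -> primitive zeta.
Proof.
move=> /fin_all_exists [K occurs]; exists (\max_(b' : B) K b').+1; split=> // b b'.
by apply: occurs; apply: leqW; apply: (leq_bigmax_cond b').
Qed.

End Substitution.

Lemma pboolP (P : Prop) : pbool P <-> P.
Proof. by rewrite /pbool; case: excluded_middle_informative. Qed.

Section SynchronizingPart.
Variables (A : finType) (lam : nat) (theta : A -> lam.-tuple A).
Hypothesis lam_gt0 : 0 < lam.
Local Notation "theta^ k" := (subst_iter theta k) (at level 8, format "theta^ k").

Lemma column_number_exists : exists c, is_column_number theta c.
Proof.
have ex_card : exists c, pbool (exists k j, [/\ 0 < k, j < lam ^ k & #|column theta k j| = c]).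
  by exists #|column theta 1 0|; apply/pboolP; exists 1, 0; rewrite expn1.
have [c /pboolP [k [j [k_gt0 lt_j card_c]]] c_min] := ex_minnP ex_card.
exists c; split; first by exists k, j.
by move=> k' j' k'_gt0 lt_j'; apply: c_min; apply/pboolP; exists k', j'.
Qed.

Lemma column_number_unique c1 c2 :
  is_column_number theta c1 -> is_column_number theta c2 -> c1 = c2.
Proof.
move=> [[k1 [j1 [k1_gt0 [lt_j1 card1]]]] min1] [[k2 [j2 [k2_gt0 [lt_j2 card2]]]] min2].
apply/anti_leq/andP; split; [rewrite -card2; exact: min1 | rewrite -card1; exact: min2].
Qed.

Variable c : nat.
Hypothesis column_number_c : is_column_number theta c.

Lemma in_syncP M : in_sync theta M <->
  #|M| = c /\ exists k j, [/\ 0 < k, j < lam ^ k & M = column theta k j].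
Proof.
rewrite /in_sync pboolP; split.
  move=> [c' [col_c' [-> [k [j [k_gt0 [lt_j ->]]]]]]].
  by rewrite (column_number_unique col_c' column_number_c); split; last exists k, j.
move=> [card_M [k [j [k_gt0 lt_j eq_M]]]].
by exists c; split=> //; split=> //; exists k, j.
Qed.

Definition subcolumn k j (M : {set A}) : {set A} := [set nth a (theta^k a) j | a in M].

Lemma column_subcolumn k j : column theta k j = subcolumn k j setT.
Proof. by apply/setP => x; apply/imsetP/imsetP => [[a _ ->]|[a _ ->]]; exists a. Qed.

Lemma subcolumn_comp k' j' k j M : j' < lam ^ k' -> j < lam ^ k ->
  subcolumn k j (subcolumn k' j' M) = subcolumn (k' + k) (j' * lam ^ k + j) M.
Proof.
move=> lt_j' lt_j; rewrite /subcolumn -imset_comp; apply: eq_imset => a /=.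
by rewrite nth_subst_iterD // (set_nth_default a) // size_subst_iter.
Qed.

(* X is stable under subcolumns: theta^k(M)_j lies in a column and has at
   most #|M| = c elements, so it is a column of minimal size. *)
Lemma subcolumn_sync k j M : in_sync theta M -> j < lam ^ k ->
  in_sync theta (subcolumn k j M).
Proof.
move=> /in_syncP [card_M [k0 [j0 [k0_gt0 lt_j0 eq_M]]]] lt_j.
have k_pos : 0 < k0 + k by rewrite addn_gt0 k0_gt0.
have lt_pos : j0 * lam ^ k + j < lam ^ (k0 + k) by rewrite expnD mixed_radix_lt.
have eq_col : subcolumn k j M = column theta (k0 + k) (j0 * lam ^ k + j).
  by rewrite eq_M column_subcolumn subcolumn_comp // -column_subcolumn.
apply/in_syncP; split; last by exists (k0 + k), (j0 * lam ^ k + j).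
apply/anti_leq/andP; split; first by rewrite -card_M leq_imset_card.
by rewrite eq_col; case: column_number_c => _; apply.
Qed.

Lemma subcolumn_minimal k j M : in_sync theta M -> j < lam ^ k ->
  #|column theta k j| = c -> subcolumn k j M = column theta k j.
Proof.
move=> sync_M lt_j card_c; apply/eqP; rewrite eqEcard; apply/andP; split.
  by rewrite column_subcolumn imsetS ?subsetT.
by have /in_syncP [-> _] := subcolumn_sync sync_M lt_j; rewrite card_c.
Qed.

Lemma sync_part_iter k (M : sync_alph theta) j : j < lam ^ k ->
  val (nth M (subst_iter (sync_part theta) k M) j) = subcolumn k j (val M).
Proof.
elim: k M j => [|k IH] M j.
  by rewrite expn0 ltnS leqn0 => /eqP -> /=; rewrite /subcolumn imset_id.
move=> lt_j; have lt_q : j %/ lam < lam ^ k by rewrite ltn_divLR // -expnSr.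
have lt_r : j %% lam < lam by rewrite ltn_mod.
have := @nth_subst_iterD _ _ (sync_part theta) k 1 M M (j %/ lam) (j %% lam).
rewrite expn1 addn1 -divn_eq => -> //.
set N := nth M (subst_iter _ k M) _.
have set_col_eq i : set_col theta (val N) i = subcolumn 1 i (val N).
  by apply: eq_imset => a; rewrite subst_iter1.
rewrite subst_iter1 (set_nth_default N) ?size_tuple //.
rewrite -(tnth_nth N (sync_part theta N) (Ordinal lt_r)) tnth_mktuple /= insubdK.
  by rewrite set_col_eq IH // subcolumn_comp ?expn1 // addn1 -divn_eq.
by rewrite set_col_eq; apply: subcolumn_sync; [apply: valP | rewrite expn1].
Qed.

Lemma sync_part_column k j (M : sync_alph theta) (N : sync_alph theta) :
  j < lam ^ k -> val N = column theta k j ->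
  nth M (subst_iter (sync_part theta) k M) j = N.
Proof.
move=> lt_j eq_N; apply: val_inj; rewrite sync_part_iter // eq_N.
by apply: subcolumn_minimal; [apply: valP | | have /in_syncP [<-] := valP N; rewrite eq_N].
Qed.

Lemma sync_part_synchronizing : exists k j m, synchronizing (sync_part theta) k j m.
Proof.
have [[k [j [k_gt0 [lt_j card_c]]]] _] := column_number_c.
have sync_col : in_sync theta (column theta k j).
  by apply/in_syncP; split=> //; exists k, j.
pose N : sync_alph theta := exist (fun M => in_sync theta M) _ sync_col.
by exists k, j, N; split=> // M; apply: sync_part_column.
Qed.

Lemma sync_part_primitive : primitive (sync_part theta).
Proof.
apply: primitive_of_eventual_occurrence => N.
have /in_syncP [_ [k [j [_ lt_j eq_N]]]] := valP N.
exists k => K M le_kK; rewrite -(subnK le_kK); set t := K - k.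
(* theta~^(t+k)(M) is theta~^k applied to theta~^t(M), whose letter j is N *)
pose M' := nth M (subst_iter (sync_part theta) t M) 0.
rewrite -(sync_part_column M' lt_j eq_N) /M' -nth_subst_iterD0 //.
by apply: mem_nth; rewrite size_subst_iter (leq_trans lt_j) // leq_pexp2l // leq_addl.
Qed.

End SynchronizingPart.

Theorem mainTheorem11 (A : finType) (lam : nat) (theta : A -> lam.-tuple A) :
  2 <= lam ->
  primitive theta ->
  (exists a0 : A, nth a0 (val (theta a0)) 0 = a0) ->
  injective theta ->
  subshift_infinite theta ->
  [/\ is_column_number (sync_part theta) 1,
      primitive (sync_part theta) &
      is_height (sync_part theta) 1].
Proof.
move=> lam_gt1 _ _ _ _; have lam_gt0 : 0 < lam by apply: ltnW.
have [c col_c] := column_number_exists theta lam_gt0.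
have [k [j [N sync]]] := sync_part_synchronizing lam_gt0 col_c.
have prim := sync_part_primitive lam_gt0 col_c.
split; [exact: synchronizing_column_number sync | exact: prim | split].
  exact: exists_fixed_point N lam_gt1.
move=> p v p_gt0 fix_v.
have [L [J ret]] := fixed_point_returns lam_gt0 sync prim p_gt0 fix_v.
exact: returns_height_one lam_gt0 ret.
Qed.
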